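(* Let $n \ge 8$ with $n\equiv 0\pmod 4$, $s$ an integer with $s^2\equiv 1\pmod n$, $s\not\equiv\pm1\pmod n$, and $G = \langle x,y \mid x^2 = y^{n/2},\ y^n = 1,\ yx = xy^s\rangle$. Let $T_1,\dots,T_{n-3}$ be sequences over $G$ with $|T_i|=2$ for all $i\in[1,n-3]$, let $T = T_1\cdot\ldots\cdot T_{n-3}$, and let $T_0$ be a sequence over $G$ with $|T_0|=4$ such that $\{y^{2w}, y^{2w+n/2}\}\subset\pi(T_0)$ for some integer $w$. Suppose there are integers $a,b$ with $\gcd(a-b,n/2)=1$ such that $y^{2a}\in\pi(T_i)$ for $i\in[1,\frac n2-1]$ and $y^{2b}\in\pi(T_i)$ for $i\in[\frac n2, n-3]$. Then $T\cdot T_0$ has a subsequence $T'$ of length $n$ with $1\in\pi(T')$ and $T_0$ a subsequence of $T'$.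
   Context: A sequence over $G$ is a finite unordered list of elements with repetition; $\cdot$ denotes concatenation. For $S=g_1\cdots g_k$, $\pi(S)$ is the set of all products $g_{\tau(1)}\cdots g_{\tau(k)}$ over all permutations $\tau$ of $[1,k]$. *)

From mathcomp Require Import all_boot all_order all_algebra all_fingroup.
Set Implicit Arguments. Unset Strict Implicit. Unset Printing Implicit Defensive.
Local Open Scope group_scope.

(* y ^ k for an integer exponent k, for an element y with y ^+ n = 1 (n > 0):
   reduce k modulo n to a natural number. *)
Definition zexpg (gT : finGroupType) (y : gT) (n : nat) (k : int) : gT :=
  y ^+ `|(k %% n%:Z)%Z|%N.

Definition piseq (gT : finGroupType) (S : seq gT) (g : gT) : Prop :=
  exists t : seq gT, perm_eq t S /\ \prod_(h <- t) h = g.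

(* S is a subsequence of U (sequences are unordered lists with repetition):
   U = S . R for some sequence R, up to reordering. *)
Definition subseqm (gT : finGroupType) (S U : seq gT) : Prop :=
  exists R : seq gT, perm_eq U (S ++ R).

From mathcomp Require Import all_boot all_order all_algebra all_fingroup.
From mathcomp Require Import ring zify.
Set Implicit Arguments. Unset Strict Implicit. Unset Printing Implicit Defensive.
Import GRing.Theory Num.Theory.
Local Open Scope group_scope.

(* Write n = 4k.  Taking T_0, j of the blocks T_1, ..., T_(2k-1) and 2k-2-j of
   the blocks T_(2k), ..., T_(4k-3) gives a sequence of length 4k whose terms
   multiply, in a suitable order, to y^(2((a-b)j + b(2k-2) + w + e)) with
   e in {0, k}.  Since a - b is a unit modulo 2k, each choice of e determines
   j modulo 2k, and the two residues differ (their difference is a unit times k),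
   so one of them lies in [0, 2k-2]. *)

Section IntegerPowers.

Variables (gT : finGroupType) (y : gT) (n : nat).
Hypotheses (n_gt0 : (0 < n)%N) (yn1 : y ^+ n = 1).

Lemma zexpgD (k1 k2 : int) : zexpg y n k1 * zexpg y n k2 = zexpg y n (k1 + k2)%R.
Proof.
rewrite /zexpg -expgD -[LHS](expg_mod _ yn1); congr (y ^+ _).
have n_neq0 : (Posz n != 0)%R by rewrite eqz_nat -lt0n.
apply/eqP; rewrite -eqz_nat -modz_nat PoszD !gez0_abs ?modz_ge0 //.
by rewrite modzDm.
Qed.

Lemma zexpgMn (k : int) (j : nat) : zexpg y n k ^+ j = zexpg y n (k * j)%R.
Proof.
elim: j => [|j IHj]; first by rewrite expg0 mulr0 /zexpg mod0z.
by rewrite expgS IHj zexpgD intS mulrDr mulr1.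
Qed.

End IntegerPowers.

Lemma zexpg_eq1 (gT : finGroupType) (y : gT) (n : nat) (k : int) :
  (n %| k)%Z -> zexpg y n k = 1.
Proof. by rewrite /zexpg => /dvdz_mod0P ->. Qed.

Section Sequences.

Variables (gT : finGroupType) (I : eqType) (f : I -> seq gT).

Lemma piseq_cat (S U : seq gT) (g h : gT) :
  piseq S g -> piseq U h -> piseq (S ++ U) (g * h).
Proof.
move=> [t [tS <-]] [t' [t'U <-]]; exists (t ++ t'); split.
  exact: perm_cat.
by rewrite big_cat.
Qed.

Lemma piseq_flatten_const (g : gT) (l : seq I) :
  (forall i, i \in l -> piseq (f i) g) ->
  piseq (flatten [seq f i | i <- l]) (g ^+ size l).
Proof.
elim: l => [|i l IHl] fl_g /=.
  by exists [::]; rewrite big_nil expg0.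
rewrite expgS; apply: piseq_cat; first by apply: fl_g; rewrite mem_head.
by apply: IHl => j jl; apply: fl_g; rewrite in_cons jl orbT.
Qed.

Lemma size_flatten_const (c : nat) (l : seq I) :
  (forall i, i \in l -> size (f i) = c) ->
  size (flatten [seq f i | i <- l]) = (c * size l)%N.
Proof.
elim: l => [|i l IHl] fl_c /=; first by rewrite muln0.
rewrite size_cat fl_c ?mem_head // IHl ?mulnS // => j jl.
by apply: fl_c; rewrite in_cons jl orbT.
Qed.

Lemma subseqm_catr (S U V : seq gT) : subseqm S U -> subseqm (S ++ V) (U ++ V).
Proof.
move=> [R UR]; exists R; apply: perm_trans (perm_cat UR (perm_refl V)) _.
by rewrite -!catA perm_cat2l perm_catC.
Qed.

Lemma subseqm_flatten (l' l : seq I) :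
  subseq l' l -> subseqm (flatten [seq f i | i <- l']) (flatten [seq f i | i <- l]).
Proof.
case/perm_to_subseq=> l'' ll'; exists (flatten [seq f i | i <- l'']).
by rewrite -flatten_cat -map_cat; apply/perm_flatten/perm_map.
Qed.

End Sequences.

Lemma subseq_iota_prefix (m j p : nat) : (j <= p)%N -> subseq (iota m j) (iota m p).
Proof. by move=> jp; rewrite -(minn_idPl jp) -take_iota take_subseq. Qed.

Lemma subseqm_iota_blocks (gT : finGroupType) (f : nat -> seq gT) (p q j1 j2 : nat) :
  (j1 <= p)%N -> (j2 <= q)%N ->
  subseqm (flatten [seq f i | i <- iota 1 j1 ++ iota p.+1 j2])
          (flatten [seq f i | i <- iota 1 (p + q)]).
Proof.
move=> j1p j2q; apply: subseqm_flatten; rewrite iotaD add1n.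
by apply: cat_subseq; apply: subseq_iota_prefix.
Qed.

Lemma coprimez_root (c r : int) (N : nat) : (0 < N)%N -> coprimez c N ->
  exists2 j : nat, (j < N)%N & (Posz N %| (c * Posz j + r)%R)%Z.
Proof.
move=> N_gt0 /eqP cN; have [u [v Bz]] := Bezoutz c N; rewrite cN in Bz.
have N_neq0 : (Posz N != 0)%R by rewrite eqz_nat -lt0n.
exists `|((- r * u) %% N)%Z|%N.
  by rewrite -ltz_nat gez0_abs ?modz_ge0 // ltz_pmod // ltz_nat.
rewrite gez0_abs ?modz_ge0 //; apply/dvdzP.
exists (r * v - c * ((- r * u) %/ N)%Z)%R.
have -> : ((- r * u) %% N)%Z = (- r * u - ((- r * u) %/ N)%Z * N)%R.
  by rewrite {2}(divz_eq (- r * u)%R N) addrC addKr.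
rewrite -[r in (_ + r)%R]mulr1 -Bz; ring.
Qed.

Lemma coprimez_root_shift (c r : int) (k : nat) : (0 < k)%N -> coprimez c (2 * k)%N ->
  exists2 e : int, e \in [:: 0%R; Posz k] &
    exists2 j : nat, (j <= 2 * k - 2)%N & (Posz (2 * k) %| (c * Posz j + r + e)%R)%Z.
Proof.
move=> k_gt0 ck; have k2_gt0 : (0 < 2 * k)%N by lia.
have [j0 j0_lt d0] := coprimez_root r k2_gt0 ck.
have [j1 j1_lt d1] := coprimez_root (r + k)%R k2_gt0 ck.
have [j0_le | j0_last] := ltnP j0 (2 * k - 1).
  by exists 0%R; rewrite ?mem_head //; exists j0; rewrite ?addr0 //; lia.
have [j1_le | j1_last] := ltnP j1 (2 * k - 1).
  by exists (Posz k); rewrite ?mem_seq2 ?eqxx ?orbT //; exists j1; rewrite -?addrA //; lia.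
have j01 : j1 = j0 by lia.
have : (Posz (2 * k) %| Posz k)%Z.
  have -> : Posz k = ((c * j1 + (r + k)) - (c * j0 + r))%R by rewrite j01; ring.
  exact: rpredB.
by rewrite dvdzE /= => /dvdn_leq; lia.
Qed.

Theorem lemma4p1 (gT : finGroupType) (G : {group gT}) (x y : gT) (n : nat) (s : int)
  (hn8 : (8 <= n)%N) (hn4 : (4 %| n)%N)
  (hs1 : (s ^+ 2 = 1 %[mod n%:Z])%Z)
  (hs2 : (s != 1 %[mod n%:Z])%Z) (hs3 : (s != - 1 %[mod n%:Z])%Z)
  (hgen : G = <<[set x; y]>>)
  (hr1 : x ^+ 2 = y ^+ (n %/ 2)) (hr2 : y ^+ n = 1)
  (hr3 : y * x = x * zexpg y n s)
  (hG : G \isog Grp (u : v : (u ^+ 2 = v ^+ (n %/ 2), v ^+ n = 1,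
                              v * u = u * v ^+ `|(s %% n%:Z)%Z|%N)))
  (Tf : nat -> seq gT) (T0 : seq gT)
  (hTf : forall i, (1 <= i <= n - 3)%N -> size (Tf i) = 2%N /\ all (mem G) (Tf i))
  (hT0 : size T0 = 4%N /\ all (mem G) T0)
  (w : int)
  (hw : piseq T0 (zexpg y n (2 * w)%R) /\ piseq T0 (zexpg y n (2 * w + (n %/ 2)%:Z)%R))
  (a b : int) (hab : coprimez (a - b)%R (n %/ 2)%:Z)
  (ha : forall i, (1 <= i <= n %/ 2 - 1)%N -> piseq (Tf i) (zexpg y n (2 * a)%R))
  (hb : forall i, (n %/ 2 <= i <= n - 3)%N -> piseq (Tf i) (zexpg y n (2 * b)%R)) :
  let T := flatten [seq Tf i | i <- iota 1 (n - 3)] in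
  exists T' : seq gT,
    subseqm T' (T ++ T0) /\ size T' = n /\ piseq T' 1 /\ subseqm T0 T'.
Proof.
move=> T; clear hs1 hs2 hs3 hgen hG hr1 hr3.
have [k n4k] := dvdnP hn4; subst n.
have k_ge2 : (2 <= k)%N by lia.
have n_gt0 : (0 < k * 4)%N by lia.
have half : ((k * 4) %/ 2 = 2 * k)%N by rewrite (_ : k * 4 = 2 * k * 2)%N ?mulnK //; lia.
rewrite half in ha hb hw hab; set m := (2 * k - 2)%N.
have [e e_in [j jm dvd_j]] := coprimez_root_shift (b * Posz m + w) (ltnW k_ge2) hab.
have T0_prod : piseq T0 (zexpg y (k * 4) (2 * (w + e))%R).
  move: e_in; rewrite mem_seq2 => /orP[] /eqP ->; first by rewrite addr0; exact: hw.1.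
  by rewrite (_ : 2 * (w + k) = 2 * w + Posz (2 * k))%R; [exact: hw.2 | rewrite PoszM; ring].
have dvd_sum : (Posz (k * 4) %| (2 * a * j + 2 * b * Posz (m - j) + 2 * (w + e))%R)%Z.
  rewrite -subzn // (_ : 2 * a * Posz j + 2 * b * (Posz m - Posz j) + 2 * (w + e) =
                         2 * ((a - b) * Posz j + (b * Posz m + w) + e))%R; last by ring.
  by rewrite (_ : k * 4 = 2 * (2 * k))%N ?PoszM ?dvdz_mul2l //; lia.
pose l := iota 1 j ++ iota (2 * k) (m - j).
have l_ok : forall i, i \in l -> (1 <= i <= k * 4 - 3)%N.
  by move=> i; rewrite mem_cat !mem_iota; lia.
exists (flatten [seq Tf i | i <- l] ++ T0); split; [|split; [|split]].
- apply: subseqm_catr; rewrite /T (_ : k * 4 - 3 = 2 * k - 1 + m)%N; last lia.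
  rewrite /l [in iota (2 * k) _](_ : 2 * k = (2 * k - 1).+1)%N; last lia.
  by apply: subseqm_iota_blocks; lia.
- rewrite size_cat (size_flatten_const (c := 2)) => [|i /l_ok /hTf []//].
  by rewrite hT0.1 size_cat !size_iota; lia.
- rewrite -(zexpg_eq1 y dvd_sum) -!zexpgD // -!zexpgMn //.
  rewrite map_cat flatten_cat; apply: piseq_cat => //; apply: piseq_cat.
    rewrite -{2}(size_iota 1 j); apply: piseq_flatten_const => i /[!mem_iota] ?.
    by apply: ha; lia.
  rewrite -{2}(size_iota (2 * k) (m - j)); apply: piseq_flatten_const => i /[!mem_iota] ?.
  by apply: hb; lia.
- by exists (flatten [seq Tf i | i <- l]); rewrite perm_catC.
Qed.
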